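(* There is an absolute constant $c$ such that for all positive integers $N,\ell,k$ with $k\le N$, $\chi(\mathcal U_{N,\ell,k})\le 2^{c k\log_2(\ell+1)}\cdot\log^{(\lfloor (k-1)/\ell\rfloor-1)}N$, where $\log^{(i)}N$ is interpreted as $N$ for $i\le 0$.
   Context: $[N]=\{1,\dots,N\}$, $S_N$ is the set of permutations of $[N]$. For $\pi,\sigma\in S_N$, $\delta(\pi,\sigma)=\max_{i\in[N]}|\pi^{-1}(i)-\sigma^{-1}(i)|$. For $1\le k\le N$, $S_{N,k}$ is the set of injective maps $[k]\to[N]$; a permutation $\pi'\in S_N$ extends $\pi\in S_{N,k}$ if $\pi'(i)=\pi(i)$ for all $i\in[k]$. For $\pi,\sigma\in S_{N,k}$, $\delta(\pi,\sigma)=\min\{\delta(\pi',\sigma'):\pi',\sigma'\in S_N$ extending $\pi,\sigma$ respectively$\}$. The $k$-restricted uncertainty graph $\mathcal U_{N,\ell,k}$ has vertex set $S_{N,k}$, with $\pi\sim\sigma$ iff $\pi(1)\ne\sigma(1)$ and $\delta(\pi,\sigma)\le\ell$. $\log^{(i)}$ denotes the $i$-fold iterated base-2 logarithm. $\chi$ denotes chromatic number. *)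

From mathcomp Require Import all_boot.
From mathcomp Require Import fingroup perm.
From Stdlib Require Import Reals.

Set Implicit Arguments.
Unset Strict Implicit.
Unset Printing Implicit Defensive.

Local Open Scope nat_scope.

(* [N] is modelled by 'I_N = {0,...,N-1} (shift by one; distances unaffected). *)

Definition natdist (a b : nat) : nat := maxn (a - b) (b - a).

Definition delta_perm (N : nat) (p s : {perm 'I_N}) : nat :=
  \max_(i : 'I_N) natdist (val ((p^-1)%g i)) (val ((s^-1)%g i)).

Definition SNk (N k : nat) : finType :=
  {f : {ffun 'I_k -> 'I_N} | injectiveb f}.

Definition extends (N k : nat) (p' : {perm 'I_N}) (f : SNk N k) : bool :=
  [forall j : 'I_N, forall i : 'I_k, (val j == val i) ==> (p' j == val f i)].

(* delta on S_{N,k}: minimum of delta over pairs of extensions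
   (extensions always exist; N is an upper bound for every delta_perm, used as
   the neutral element of the min). *)
Definition delta_restr (N k : nat) (f g : SNk N k) : nat :=
  \big[minn/N]_(pq : {perm 'I_N} * {perm 'I_N} | extends pq.1 f && extends pq.2 g)
     delta_perm pq.1 pq.2.

(* adjacency of the k-restricted uncertainty graph U_{N,l,k}:
   pi(1) <> sigma(1) and delta(pi,sigma) <= l  (index 1 is 'I_k's 0) *)
Definition U_adj (N l k : nat) (f g : SNk N k) : bool :=
  [exists i : 'I_k, (val i == 0) && (val f i != val g i)]
  && (delta_restr f g <= l).

Definition colorable (V : finType) (e : rel V) (m : nat) : bool :=
  [exists c : {ffun V -> 'I_m}, [forall x, forall y, e x y ==> (c x != c y)]].

(* chromatic number: least m admitting a proper m-colouring (#|V| always works) *)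
Definition chi (V : finType) (e : rel V) : nat :=
  \big[minn/#|V|]_(m < #|V|.+1 | colorable e m) m.

Local Open Scope R_scope.

Definition log2 (x : R) : R := ln x / ln 2.

(* iterated base-2 logarithm; log^{(0)} x = x.  Each step is clamped below
   by 1 so that the iterate is always defined and >= 1. *)
Fixpoint iterlog (i : nat) (x : R) : R :=
  match i with
  | O => x
  | S i' => Rmax 1 (log2 (iterlog i' x))
  end.

From Stdlib Require Import Reals Lra.
From mathcomp Require Import all_boot.
From mathcomp Require Import fingroup perm.
From mathcomp Require Import zify.

Set Implicit Arguments.
Unset Strict Implicit.
Unset Printing Implicit Defensive.

(* A vertex f of U_{N,l,k} is seen through its sequence of values
   f(0), ..., f(k-1).  If f ~ g, then f(0) != g(0), and every value g(i) with
   i + l < k occurs in f at a position within distance l of i (both extend to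
   permutations at displacement distance <= l).  We colour by iterated colour
   reduction (in the spirit of Linial's algorithm): the stage-0 colour is f(0);
   the stage-(t+1) colour of f combines its stage-t colour x with the least
   prime p separating x from the stage-t colours of all "shifts" of f (the
   sequences obtained by moving each of the first t*l+1 values by at most l),
   and is coded as (p, x mod p).  Such a prime exists below O((D lam)^2) by a
   Chebyshev-type estimate on the number of primes, where D = (2l+1)^k bounds
   the number of shifts and lam is the bit-width of the stage-t colours; hence
   the bit-widths shrink like an iterated logarithm.  The stage t = (k-1)/l
   colouring is proper, giving chi <= 2^width <= (l+1)^(150 k) log^(t-1) N. *)

Local Open Scope nat_scope.

Definition prime_count (Q : nat) : nat := size (filter prime (iota 0 Q.+1)).

Lemma central_binom_ge n : 2 ^ n <= 'C(n.*2, n).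
Proof.
elim: n => [|n IH] //.
have step : 'C(n.+1.*2, n.+1) = 2 * 'C(n.*2.+1, n).
  apply/eqP; rewrite -(eqn_pmul2l (ltn0Sn n)) -mul_bin_diag doubleS /=.
  by apply/eqP; rewrite mulnA; congr (_ * _); lia.
rewrite step expnS leq_mul2l /=; exact: leq_trans IH (leq_bin2l _ _).
Qed.

Lemma logn_fact_upto p n m : prime p -> n <= m ->
  logn p n`! = \sum_(1 <= k < m.+1) n %/ p ^ k.
Proof.
move=> p_pr le_nm; rewrite logn_fact // [RHS](@big_cat_nat _ _ _ n.+1) //= ?ltnS //.
rewrite [X in _ + X]big1_seq ?addn0 // => k /andP[_].
rewrite mem_index_iota => /andP[lt_nk _].
apply: divn_small; apply: leq_trans lt_nk _.
by apply: ltnW; apply: ltn_expl; exact: prime_gt1.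
Qed.

Lemma count_indices_le t M : \sum_(1 <= k < M) (k <= t) <= minn M.-1 t.
Proof.
elim: M => [|[|M] IH]; [by rewrite big_geq | by rewrite big_geq |].
by rewrite big_nat_recr //=; case: (leqP M.+1 t) => /= h; lia.
Qed.

Lemma divn_double_le n d : 0 < d -> n.*2 %/ d <= (n %/ d).*2 + (d <= n.*2).
Proof.
move=> d_gt0; case: (leqP d n.*2) => [_|lt_2n_d]; last by rewrite divn_small.
rewrite addn1 -ltnS ltn_divLR // {1 2}(divn_eq n d).
by have := ltn_pmod n d_gt0; nia.
Qed.

Lemma pfactor_central_binom_le p n : prime p -> 0 < n ->
  p ^ logn p 'C(n.*2, n) <= n.*2.
Proof.
move=> p_pr n_gt0; have p_gt1 := prime_gt1 p_pr.
set t := trunc_log p n.*2.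
have fact_eq : logn p (n.*2)`! = logn p 'C(n.*2, n) + (logn p n`! + logn p n`!).
  have := bin_fact (leq_addr n n); rewrite -addnn addnK => <-.
  by rewrite lognM ?muln_gt0 ?fact_gt0 ?bin_gt0 ?leq_addr // lognM ?fact_gt0.
have le_n_2n : n <= n.*2 by rewrite -addnn leq_addr.
rewrite (@logn_fact_upto p n.*2 n.*2) // (@logn_fact_upto p n n.*2) // in fact_eq.
have termwise : \sum_(1 <= k < n.*2.+1) n.*2 %/ p ^ k <=
    \sum_(1 <= k < n.*2.+1) (n %/ p ^ k + n %/ p ^ k + (k <= t)).
  apply: leq_sum => k _; have pk_gt0 : 0 < p ^ k by rewrite expn_gt0 ltnW.
  apply: leq_trans (divn_double_le _ pk_gt0) _; rewrite addnn.
  rewrite leq_add2l; case: (leqP (p ^ k) n.*2) => // le_pk.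
  by rewrite (trunc_log_max p_gt1 le_pk).
rewrite !big_split /= in termwise.
have few := count_indices_le t n.*2.+1.
have : logn p 'C(n.*2, n) <= t by lia.
rewrite -(leq_exp2l _ _ p_gt1) => le_t; apply: leq_trans le_t _.
by apply: trunc_logP; rewrite // double_gt0.
Qed.

(* 'C(2n, n) <= (2n)^pi(2n): every prime factor of 'C(2n, n) is at most 2n and
   contributes a prime power at most 2n. *)
Lemma central_binom_le_pow n : 0 < n -> 'C(n.*2, n) <= n.*2 ^ prime_count n.*2.
Proof.
move=> n_gt0; have C_gt0 : 0 < 'C(n.*2, n) by rewrite bin_gt0 -addnn leq_addr.
have prime_of p : p \in primes 'C(n.*2, n) -> prime p.
  by rewrite mem_primes => /andP[].
rewrite {1}(prod_prime_decomp C_gt0) prime_decompE big_map /=.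
apply: (@leq_trans (\prod_(p <- primes 'C(n.*2, n)) n.*2)).
  rewrite big_seq [X in _ <= X]big_seq; apply: leq_prod => p /prime_of p_pr.
  exact: pfactor_central_binom_le.
rewrite big_const_seq count_predT iter_muln_1 leq_pexp2l ?double_gt0 //.
apply: uniq_leq_size => [|p p_in]; first exact: primes_uniq.
have p_pr := prime_of p p_in; rewrite mem_filter p_pr mem_iota add0n ltnS /=.
apply: leq_trans (pfactor_central_binom_le p_pr n_gt0).
by rewrite -{1}(expn1 p) leq_exp2l ?prime_gt1 // logn_gt0.
Qed.

Lemma prime_count_pow2_ge s : 2 ^ s <= s.+1 * prime_count (2 ^ s.+1).
Proof.
have pow_gt0 : 0 < 2 ^ s by rewrite expn_gt0.
have := leq_trans (central_binom_ge (2 ^ s)) (central_binom_le_pow pow_gt0).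
by rewrite -muln2 -expnSr -expnM leq_exp2l.
Qed.

Definition prime_bound (A : nat) : nat := 2 ^ ((trunc_log 2 A).+1.*2 + 5).

Lemma prime_count_prime_bound A : A < prime_count (prime_bound A).
Proof.
set u := (trunc_log 2 A).+1.
have A_lt : A < 2 ^ u by apply: trunc_log_ltn.
have u_lt : u < 2 ^ u by apply: ltn_expl.
have cheb := prime_count_pow2_ge (u.*2 + 4).
rewrite -addnS -/u in cheb; rewrite /prime_bound -/u ltnNge; apply/negP => le_A.
have := leq_trans cheb (leq_mul (leqnn _) le_A).
have -> : 2 ^ (u.*2 + 4) = 16 * (2 ^ u * 2 ^ u) by rewrite expnD -addnn expnD mulnC.
by nia.
Qed.

Lemma pow2_size_primes_le z : 0 < z -> 2 ^ size (primes z) <= z.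
Proof.
move=> z_gt0; rewrite {2}(prod_prime_decomp z_gt0) prime_decompE big_map /=.
rewrite -(iter_muln_1 2) -(count_predT (primes z)) -big_const_seq.
rewrite big_seq [X in _ <= X]big_seq; apply: leq_prod => p p_in.
have p_pr : prime p by move: p_in; rewrite mem_primes => /andP[].
apply: leq_trans (prime_gt1 p_pr) _.
by rewrite -{1}(expn1 p) leq_exp2l ?prime_gt1 // logn_gt0.
Qed.

Definition separates (x : nat) (Y : seq nat) (p : nat) : bool :=
  prime p && all (fun y => (y == x) || (x %% p != y %% p)) Y.

Lemma prime_dvd_natdist p x y : prime p -> y != x -> x %% p = y %% p ->
  p \in primes (natdist x y).
Proof.
move=> p_pr ne_yx eq_mod; rewrite mem_primes p_pr /=.
have [le_yx | lt_xy] := leqP y x.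
  have -> : natdist x y = x - y by rewrite /natdist; lia.
  rewrite subn_gt0 ltn_neqAle ne_yx le_yx /= -eqn_mod_dvd //.
  exact/eqP.
have -> : natdist x y = y - x by rewrite /natdist; lia.
by rewrite subn_gt0 lt_xy /= -eqn_mod_dvd ?(ltnW lt_xy) // eq_mod.
Qed.

Lemma size_primes_natdist_le lam x y : x < 2 ^ lam -> y < 2 ^ lam ->
  size (primes (natdist x y)) <= lam.
Proof.
move=> x_lt y_lt; case: (posnP (natdist x y)) => [-> //| d_gt0].
rewrite -(leq_exp2l _ _ (isT : 1 < 2)); apply: leq_trans (pow2_size_primes_le d_gt0) _.
by rewrite /natdist; lia.
Qed.

(* Among the first primes there is one separating x from a list Y of at most D
   values below 2^lam: each |x - y| has at most lam prime factors, so at most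
   D * lam primes fail, while more than D * lam primes lie below the bound. *)
Lemma exists_separating_prime D lam x Y : x < 2 ^ lam ->
  all (fun y => y < 2 ^ lam) Y -> size Y <= D ->
  has (separates x Y) (iota 0 (prime_bound (D * lam)).+1).
Proof.
move=> x_lt Y_lt size_Y; apply/negPn/negP => /hasPn none.
set Q := prime_bound (D * lam).
pose bad := flatten [seq primes (natdist x y) | y <- Y].
have sub_bad : {subset filter prime (iota 0 Q.+1) <= bad}.
  move=> p; rewrite mem_filter => /andP[p_pr p_in].
  have := none p p_in; rewrite /separates p_pr => /allPn[y y_in].
  rewrite negb_or negbK => /andP[ne_yx /eqP eq_mod].
  apply/flattenP; exists (primes (natdist x y)); first exact: map_f.
  exact: prime_dvd_natdist.
have size_bad : size bad <= size Y * lam.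
  rewrite /bad; elim: (Y) (Y_lt) => [|y Y' IH] //= /andP[y_lt Y'_lt].
  by rewrite size_cat mulSn leq_add ?IH ?size_primes_natdist_le.
have few_primes := uniq_leq_size (filter_uniq _ (iota_uniq 0 Q.+1)) sub_bad.
have many_primes := prime_count_prime_bound (D * lam).
have size_YD : size Y * lam <= D * lam by rewrite leq_mul2r size_Y orbT.
have := leq_trans (leq_trans few_primes size_bad) size_YD.
by rewrite leqNgt many_primes.
Qed.

(* The least prime (below the bound) separating x from Y, or the bound plus one
   if there is none. *)
Definition separating_prime (D lam x : nat) (Y : seq nat) : nat :=
  find (separates x Y) (iota 0 (prime_bound (D * lam)).+1).

(* 0 is not prime, so the least separating prime is positive. *)
Lemma separating_prime_gt0 D lam x Y : 0 < separating_prime D lam x Y.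
Proof. by []. Qed.

Lemma separating_prime_le D lam x Y :
  separating_prime D lam x Y <= (prime_bound (D * lam)).+1.
Proof.
by have := find_size (separates x Y) (iota 0 (prime_bound (D * lam)).+1); rewrite size_iota.
Qed.

Lemma separating_primeP D lam x Y : x < 2 ^ lam ->
  all (fun y => y < 2 ^ lam) Y -> size Y <= D ->
  separates x Y (separating_prime D lam x Y).
Proof.
move=> x_lt Y_lt size_Y; have ex := exists_separating_prime x_lt Y_lt size_Y.
have := nth_find 0 ex; rewrite nth_iota ?add0n //.
by move: ex; rewrite has_find size_iota.
Qed.

(* One colour-reduction step: a colour x < 2^lam, together with the list Y of
   colours of its at most D potential neighbours, is replaced by the pair
   (p, x mod p) for the least prime p separating x from Y, coded as a number. *)
Definition reduce_colour (D lam x : nat) (Y : seq nat) : nat :=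
  let p := separating_prime D lam x Y in p * (prime_bound (D * lam)).+2 + x %% p.

(* The width of the reduced colours: 2 ^ next_width D lam = (2 Q)^2 where Q is
   the prime bound, so next_width D lam = O(log (D * lam)). *)
Definition next_width (D lam : nat) : nat := ((trunc_log 2 (D * lam)).+1.*2 + 6).*2.

Lemma reduce_colour_lt D lam x Y : reduce_colour D lam x Y < 2 ^ next_width D lam.
Proof.
rewrite /reduce_colour /next_width; set Q := prime_bound (D * lam).
have pow_eq : 2 ^ ((trunc_log 2 (D * lam)).+1.*2 + 6) = Q.*2.
  by rewrite /Q /prime_bound addnS expnS mul2n.
have Q_ge2 : 2 <= Q by rewrite /Q /prime_bound (leq_exp2l 1) // addnS.
rewrite -muln2 mulnC expnM pow_eq.
have p_gt0 := separating_prime_gt0 D lam x Y.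
have p_le := separating_prime_le D lam x Y.
have := ltn_pmod x p_gt0; rewrite -/Q in p_le *; nia.
Qed.

Lemma reduce_colour_neq D lam x y Y Y' : x < 2 ^ lam ->
  all (fun z => z < 2 ^ lam) Y -> size Y <= D -> y \in Y -> y != x ->
  reduce_colour D lam x Y != reduce_colour D lam y Y'.
Proof.
move=> x_lt Y_lt size_Y y_in ne_yx; apply/negP => /eqP.
rewrite /reduce_colour; set Q := prime_bound (D * lam).
have /andP[_ /allP /(_ y y_in)] := separating_primeP x_lt Y_lt size_Y.
set p := separating_prime D lam x Y; set p' := separating_prime D lam y Y'.
have p_le : p <= Q.+1 by exact: separating_prime_le.
have p'_le : p' <= Q.+1 by exact: separating_prime_le.
have x_mod := ltn_pmod x (separating_prime_gt0 D lam x Y).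
have y_mod := ltn_pmod y (separating_prime_gt0 D lam y Y').
rewrite -/p -/p' in x_mod y_mod * => sep eq_code.
have eq_p : p = p'.
  have := congr1 (fun z => z %/ Q.+2) eq_code.
  by rewrite /= !divnMDl // !divn_small //; lia.
rewrite -eq_p in eq_code; have eq_mod : x %% p = y %% p by lia.
by move: sep; rewrite (negbTE ne_yx) eq_mod eqxx.
Qed.

(* The values f(0), ..., f(k-1) of f in S_{N,k}, as a sequence padded with 0. *)
Definition values N k (f : SNk N k) (i : nat) : nat :=
  odflt 0 (omap (fun j : 'I_k => val (val f j)) (insub i)).

Lemma values_ord N k (f : SNk N k) (j : 'I_k) : values f j = val (val f j).
Proof. by rewrite /values valK. Qed.

Lemma values_lt N k (f : SNk N k) i : 0 < N -> values f i < N.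
Proof. by move=> N_gt0; rewrite /values; case: insub => [j|] /=. Qed.

Lemma adj_values0 N l k (f g : SNk N k) : U_adj l f g -> values f 0 != values g 0.
Proof.
by case/andP => /existsP[i /andP[/eqP i0 ne]] _; rewrite -i0 !values_ord.
Qed.

Lemma bigmin_witness (I : finType) (P : pred I) (F : I -> nat) (b l : nat) :
  l < b -> \big[minn/b]_(i | P i) F i <= l -> exists i, P i && (F i <= l).
Proof.
move=> lt_lb small; apply/existsP; apply: contraTT small => /existsPn none.
rewrite -ltnNge; elim/big_ind: _ => // [x y lx ly | i Pi]; first by rewrite leq_min lx ly.
by have := none i; rewrite Pi /= -ltnNge.
Qed.

Lemma extends_at N k (p' : {perm 'I_N}) (f : SNk N k) (j : 'I_N) (i : 'I_k) :
  extends p' f -> val j = val i -> p' j = val f i.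
Proof. by move=> /forallP /(_ j) /forallP /(_ i) /implyP ext eq_ji; apply/eqP/ext/eqP. Qed.

Lemma natdist_le_delta_perm N (p s : {perm 'I_N}) (v : 'I_N) :
  natdist (val ((p^-1)%g v)) (val ((s^-1)%g v)) <= delta_perm p s.
Proof. exact: (@leq_bigmax _ (fun v => natdist (val ((p^-1)%g v)) (val ((s^-1)%g v)))). Qed.

Lemma adj_window N l k (f g : SNk N k) : U_adj l f g -> l < N ->
  forall i, i + l < k -> exists j, [/\ j <= i + l, i <= j + l & values g i = values f j].
Proof.
case/andP => _ near lt_lN i lt_ik.
have [[p s] /andP[/andP[ext_f ext_g] small]] := bigmin_witness lt_lN near.
have kN : k <= N by have := leq_card _ (injectiveP _ (valP f)); rewrite !card_ord.
have ik : i < k by lia.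
have iN : i < N by lia.
pose v := s (Ordinal iN); pose j := (p^-1)%g v.
have s_inv : (s^-1)%g v = Ordinal iN by rewrite /v permK.
have dist := leq_trans (natdist_le_delta_perm p s v) small.
rewrite s_inv /natdist /= -/j in dist.
have jk : j < k by lia.
exists (nat_of_ord j); split; [lia | lia |].
have -> : i = Ordinal ik by [].
rewrite (_ : nat_of_ord j = Ordinal jk) // !values_ord.
have g_i : s (Ordinal iN) = val g (Ordinal ik) by apply: extends_at ext_g _.
have f_j : p j = val f (Ordinal jk) by apply: extends_at ext_f _.
by rewrite -g_i -f_j /j permKV.
Qed.

(* Shifts of radius l: the offsets o move each of the positions 0..n of h by
   o_i - l, i.e. anywhere within distance l. *)
Definition shift_offsets (l n : nat) : finType := {ffun 'I_n.+1 -> 'I_(l.*2).+1}.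

Definition shifted (l n : nat) (h : nat -> nat) (o : shift_offsets l n) : nat -> nat :=
  fun i => if i <= n then h (i + o (inord i) - l) else 0.

Lemma adj_shifted N l k n (f g : SNk N k) : U_adj l f g -> l < N -> n + l < k ->
  exists o : shift_offsets l n, forall i, i <= n -> values g i = shifted (values f) o i.
Proof.
move=> adj lt_lN lt_nk.
pose P (i : 'I_n.+1) (j : 'I_k) := [&& j <= i + l, i <= j + l & values g i == values f j].
exists [ffun i => if [pick j | P i j] is Some j then inord (j + l - i) else ord0].
move=> i le_in; rewrite /shifted le_in ffunE.
have i_eq : nat_of_ord (inord i : 'I_n.+1) = i by rewrite inordK.
case: pickP => [j /and3P[le_ji le_ij /eqP g_i] | none].
  rewrite i_eq in le_ji le_ij g_i.
  by rewrite inordK; [rewrite g_i; congr values; lia | lia].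
have lt_ik : i + l < k by lia.
have [j [le_ji le_ij g_i]] := adj_window adj lt_lN lt_ik.
have lt_jk : j < k by lia.
by have := none (Ordinal lt_jk); rewrite /P i_eq le_ji le_ij g_i eqxx.
Qed.

(* The number of shifts of radius l of a prefix shorter than k bounds the
   number of potential neighbours met by the colour reduction. *)
Definition shift_count (l k : nat) : nat := (l.*2.+1) ^ k.

Lemma card_shift_offsets l n k : n < k -> #|shift_offsets l n| <= shift_count l k.
Proof. by move=> lt_nk; rewrite card_ffun !card_ord leq_pexp2l. Qed.

Section IteratedColouring.
Variables N l k : nat.

Fixpoint width (t : nat) : nat :=
  if t is t'.+1 then next_width (shift_count l k) (width t') else (trunc_log 2 N).+1.

Fixpoint colour (t : nat) (h : nat -> nat) : nat :=
  if t is t'.+1 then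
    reduce_colour (shift_count l k) (width t') (colour t' h)
      [seq colour t' (shifted h o) | o : shift_offsets l (t' * l)]
  else h 0 %% N.

Lemma colour_lt t h : 0 < N -> colour t h < 2 ^ width t.
Proof.
move=> N_gt0; case: t => [|t] /=; last exact: reduce_colour_lt.
exact: leq_trans (ltn_pmod _ N_gt0) (ltnW (trunc_log_ltn _ _)).
Qed.

Lemma colour_local t h1 h2 : (forall i, i <= t * l -> h1 i = h2 i) ->
  colour t h1 = colour t h2.
Proof.
elim: t h1 h2 => [|t IH] h1 h2 eq_h /=; first by rewrite eq_h.
rewrite (IH h1 h2) => [|i le_i]; last by apply: eq_h; rewrite mulSn; lia.
congr reduce_colour; apply: eq_map => o; apply: IH => i le_i.
rewrite /shifted le_i; apply: eq_h.
by have := ltn_ord (o (inord i)); rewrite mulSn; lia.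
Qed.

Lemma colour_proper t (f g : SNk N k) : 0 < N -> t * l < k ->
  U_adj l f g -> colour t (values f) != colour t (values g).
Proof.
move=> N_gt0; elim: t => [|t IH] lt_tk adj /=.
  by rewrite !modn_small ?values_lt // (adj_values0 adj).
have lt_tk' : t * l < k by move: lt_tk; rewrite mulSn; lia.
have lt_lN : l < N.
  have := leq_card _ (injectiveP _ (valP f)); rewrite !card_ord.
  by move: lt_tk; rewrite mulSn; lia.
apply: reduce_colour_neq.
- exact: colour_lt.
- by apply/allP => z /mapP[o _ ->]; apply: colour_lt.
- by rewrite size_map -cardE card_shift_offsets.
- have lt_tlk : t * l + l < k by move: lt_tk; rewrite mulSn; lia.
  have [o shift] := adj_shifted adj lt_lN lt_tlk.
  by apply/mapP; exists o; rewrite ?mem_enum //; apply: colour_local.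
- by rewrite eq_sym IH.
Qed.

End IteratedColouring.

Lemma bigmin_le (I : eqType) (r : seq I) (P : pred I) (F : I -> nat) b j :
  j \in r -> P j -> \big[minn/b]_(i <- r | P i) F i <= F j.
Proof.
elim: r => [|a r IH] //; rewrite in_cons big_cons => /orP[/eqP <-|j_in] Pj.
  by rewrite Pj geq_minl.
by case: (P a); rewrite ?geq_min IH ?orbT.
Qed.

Lemma chi_le (V : finType) (e : rel V) m : colorable e m -> chi e <= m.
Proof.
move=> col_m; rewrite /chi; case: (leqP m #|V|) => [le_mV | lt_Vm].
  rewrite -ltnS in le_mV.
  exact: (bigmin_le (fun i : 'I_#|V|.+1 => nat_of_ord i) _ (mem_index_enum (Ordinal le_mV))).
apply: leq_trans (ltnW lt_Vm); elim/big_ind: _ => // [x y le_x _ | i _].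
  by rewrite geq_min le_x.
by rewrite -ltnS.
Qed.

Lemma colorable_of (V : finType) (e : rel V) (c : V -> nat) m :
  (forall v, c v < m) -> (forall x y, e x y -> c x != c y) -> colorable e m.
Proof.
move=> c_lt proper; apply/existsP; exists [ffun v => Ordinal (c_lt v)].
apply/forallP => x; apply/forallP => y; apply/implyP => exy.
by rewrite !ffunE; apply: proper.
Qed.

Lemma chi_le_pow_width N l k : 0 < N -> 0 < k ->
  chi (@U_adj N l k) <= 2 ^ width N l k ((k - 1) %/ l).
Proof.
move=> N_gt0 k_gt0; apply: chi_le.
apply: (@colorable_of _ _ (fun f => colour N l k ((k - 1) %/ l) (values f))).
  by move=> f; apply: colour_lt.
move=> f g; apply: colour_proper => //.
by have := leq_divM (k - 1) l; lia.
Qed.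

(* The integer iterated logarithm, clamped below by 1 like iterlog. *)
Fixpoint ilog (N t : nat) : nat :=
  if t is t'.+1 then maxn 1 (trunc_log 2 (ilog N t')) else N.

Lemma ilog_gt0 N t : 0 < N -> 0 < ilog N t.
Proof. by move=> N_gt0; case: t => [|t] //=; rewrite leq_max. Qed.

Lemma pow2_ilogS N t : 0 < N -> 2 ^ ilog N t.+1 <= 2 * ilog N t.
Proof.
move=> N_gt0; have L_gt0 := ilog_gt0 t N_gt0; rewrite /= /maxn.
case: ltnP => [_|_]; last by rewrite expn1; lia.
by have := trunc_logP (isT : 1 < 2) L_gt0; lia.
Qed.

Lemma trunc_log2_mul_le x y : trunc_log 2 (x * y) <= trunc_log 2 x + trunc_log 2 y + 1.
Proof.
case: (posnP (x * y)) => [-> | xy_gt0]; first by rewrite trunc_log0.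
rewrite -ltnS -(@ltn_exp2l 2) //; apply: leq_ltn_trans (trunc_logP _ xy_gt0) _ => //.
have -> : (trunc_log 2 x + trunc_log 2 y + 1).+1 = (trunc_log 2 x).+1 + (trunc_log 2 y).+1.
  by lia.
rewrite expnD.
exact: ltn_mul (@trunc_log_ltn 2 x isT) (@trunc_log_ltn 2 y isT).
Qed.

Lemma eight_mul_le_pow2 s : 8 * s <= 2 ^ s + 64.
Proof.
elim: s => [|s IH] //; case: (leqP s 2) => [|lt_2s]; first by case: s {IH} => [|[|[|]]].
have pow_ge8 : 2 ^ 3 <= 2 ^ s by rewrite leq_exp2l.
by rewrite expnS; lia.
Qed.

Lemma eight_trunc_log_le y : 8 * trunc_log 2 y <= y + 64.
Proof.
case: (posnP y) => [-> | y_gt0]; first by rewrite trunc_log0.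
by apply: leq_trans (eight_mul_le_pow2 _) _; rewrite leq_add2r trunc_logP.
Qed.

Lemma pow4_le_pow2 s : s ^ 4 <= 32 * 2 ^ s.
Proof.
elim: s => [|s IH] //; case: (leqP s 8) => [|lt_8s].
  by case: s {IH} => [|[|[|[|[|[|[|[|[|]]]]]]]]].
have step : s.+1 ^ 4 <= 2 * s ^ 4.
  by rewrite !expnS expn0 !muln1; nia.
by rewrite [2 ^ s.+1]expnS; lia.
Qed.

(* The widths grow like an iterated logarithm of N, up to an additive term
   depending only on l and k. *)
Definition width_offset (l k : nat) : nat := 8 * trunc_log 2 (shift_count l k) + 124.

(* width t <= width_offset + 4 ilog N (t+1): the logarithm of the doubly
   logarithmic term is absorbed by the constant offset. *)
Lemma width_le N l k t : 0 < N -> width N l k t <= width_offset l k + 4 * ilog N t.+1.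
Proof.
move=> N_gt0; elim: t => [|t IH] /=.
  by have := leq_maxr 1 (trunc_log 2 N); rewrite /width_offset; lia.
rewrite /next_width; set D := shift_count l k; set w := width N l k t in IH *.
set a := width_offset l k in IH *; set L := ilog N t.+1 in IH *.
have L_gt0 : 0 < L by apply: ilog_gt0.
have log_w : trunc_log 2 w <= trunc_log 2 (a + 4) + trunc_log 2 L + 1.
  apply: leq_trans (trunc_log2_mul_le _ _); apply: leq_trunc_log.
  by apply: leq_trans IH _; nia.
have log_Dw := trunc_log2_mul_le D w.
have log_a := eight_trunc_log_le (a + 4).
have log_L : trunc_log 2 L <= maxn 1 (trunc_log 2 L) := leq_maxr _ _.
change (maxn 1 (trunc_log 2 (ilog N t))) with L.
rewrite /a /width_offset -/D in log_w log_a *; lia.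
Qed.

Lemma pow2_width_offset_le l k : 0 < l -> 0 < k ->
  2 ^ width_offset l k * 1024 <= l.+1 ^ (150 * k).
Proof.
move=> l_gt0 k_gt0; rewrite /width_offset; set D := shift_count l k.
have pow_le_D : 2 ^ trunc_log 2 D <= D by rewrite trunc_logP // expn_gt0.
rewrite (_ : 1024 = 2 ^ 10) // -expnD (_ : 8 * _ + 124 + 10 = trunc_log 2 D * 8 + 134).
  2: lia.
rewrite expnD expnM (_ : 150 * k = (2 * k) * 8 + 134 * k); last lia.
rewrite expnD; apply: leq_mul.
  rewrite expnM leq_exp2r //; apply: leq_trans pow_le_D _.
  rewrite /D /shift_count expnM leq_exp2r // expnS expn1; nia.
by apply: leq_trans (_ : l.+1 ^ 134 <= _); rewrite ?leq_exp2r ?leq_pexp2l //; lia.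
Qed.

Lemma chi_le_ilog N l k : 0 < N -> 0 < l -> 0 < k ->
  chi (@U_adj N l k) <= l.+1 ^ (150 * k) * ilog N ((k - 1) %/ l - 1).
Proof.
move=> N_gt0 l_gt0 k_gt0; apply: leq_trans (chi_le_pow_width l N_gt0 k_gt0) _.
have K_ge2 : 2 <= l.+1 ^ (150 * k).
  by apply: leq_trans (_ : l.+1 ^ 1 <= _); rewrite ?leq_pexp2l //; lia.
case: ((k - 1) %/ l) => [|t] /=.
  by have := trunc_logP (isT : 1 < 2) N_gt0; rewrite expnS; nia.
rewrite subn1 /=; apply: leq_trans (_ : 2 ^ (width_offset l k + 4 * ilog N t.+2) <= _).
  by rewrite leq_exp2l //; exact: (width_le l k t.+1 N_gt0).
have L1 := pow2_ilogS t.+1 N_gt0; have L0 := pow2_ilogS t N_gt0.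
have L4 := pow4_le_pow2 (ilog N t.+1).
have offset := pow2_width_offset_le l_gt0 k_gt0.
have pow4_L : (2 ^ ilog N t.+2) ^ 4 <= 16 * ilog N t.+1 ^ 4.
  by rewrite -[16]/(2 ^ 4) -expnMn leq_exp2r.
rewrite expnD (mulnC 4) expnM.
set X := 2 ^ width_offset l k in offset *; set Y := (2 ^ ilog N t.+2) ^ 4 in pow4_L *.
have Y_le : Y <= 1024 * ilog N t by lia.
apply: leq_trans (_ : X * (1024 * ilog N t) <= _); first by rewrite leq_mul2l Y_le orbT.
by rewrite mulnA leq_mul2r offset orbT.
Qed.

Local Open Scope R_scope.

Lemma ln2_pos : 0 < ln 2.
Proof. by have := ln_lt_2; lra. Qed.

Lemma ln_le_compat x y : 0 < x -> x <= y -> ln x <= ln y.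
Proof. by move=> x_gt0 [lt_xy | ->]; [apply/Rlt_le/ln_increasing | apply: Rle_refl]. Qed.

Lemma INR_leq (m n : nat) : (m <= n)%nat -> INR m <= INR n.
Proof. by move/leP; apply: le_INR. Qed.

Lemma INR_muln (a b : nat) : INR (muln a b) = INR a * INR b.
Proof. by rewrite -multE mult_INR. Qed.

Lemma INR_expn (a b : nat) : INR (expn a b) = INR a ^ b.
Proof. by elim: b => [|b IH] //; rewrite expnS INR_muln IH. Qed.

Lemma Rpower2_log2 (n : nat) (x : R) : 0 < x -> Rpower 2 (INR n * log2 x) = x ^ n.
Proof.
move=> x_gt0; rewrite -Rpower_pow // /Rpower /log2; f_equal.
by have ln2_gt0 := ln2_pos; field; lra.
Qed.

Lemma trunc_log2_le_log2 (L : nat) : (0 < L)%nat -> INR (trunc_log 2 L) <= log2 (INR L).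
Proof.
move=> L_gt0; have := INR_leq (@trunc_logP 2 L isT L_gt0).
rewrite INR_expn (_ : INR 2 = 2); last by simpl; lra.
move=> pow_le.
have ln_le := ln_le_compat (pow_lt _ (trunc_log 2 L) Rlt_0_2) pow_le.
rewrite ln_pow in ln_le; last lra.
rewrite /log2; apply: (Rmult_le_reg_r (ln 2)); first exact: ln2_pos.
by rewrite /Rdiv Rmult_assoc Rinv_l; [lra | have := ln2_pos; lra].
Qed.

(* Hence ilog is below iterlog, both being clamped below by 1. *)
Lemma ilog_le_iterlog N t : (0 < N)%nat -> INR (ilog N t) <= iterlog t (INR N).
Proof.
move=> N_gt0; elim: t => [|t IH] /=; first exact: Rle_refl.
have L_gt0 := ilog_gt0 t N_gt0; rewrite /maxn; case: ltnP => _.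
  apply: Rle_trans (Rmax_r _ _); apply: Rle_trans (trunc_log2_le_log2 L_gt0) _.
  rewrite /log2; apply: Rmult_le_compat_r.
    by apply/Rlt_le/Rinv_0_lt_compat/ln2_pos.
  by apply: ln_le_compat => //; have := INR_leq L_gt0; simpl; lra.
by apply: Rle_trans (Rmax_l _ _); simpl; lra.
Qed.

(* The theorem, with c = 150: chi_le_ilog and (l+1)^(150 k) = 2^(150 k log2 (l+1)). *)
Theorem lemma1p5 :
  exists c : R,
    forall N l k : nat, (0 < N)%nat -> (0 < l)%nat -> (0 < k)%nat -> (k <= N)%nat ->
      (INR (chi (@U_adj N l k))
        <= Rpower 2 (c * INR k * log2 (INR l + 1))
           * iterlog ((k - 1) %/ l - 1)%nat (INR N))%R.
Proof.
exists 150 => N l k N_gt0 l_gt0 k_gt0 _.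
have l1_gt0 : 0 < INR l + 1 by have := pos_INR l; lra.
have bound := INR_leq (chi_le_ilog N_gt0 l_gt0 k_gt0).
rewrite INR_muln INR_expn S_INR in bound; apply: Rle_trans bound _.
rewrite (_ : 150 * INR k = INR (150 * k)%nat); last by rewrite INR_muln; simpl; lra.
rewrite Rpower2_log2 //; apply: Rmult_le_compat_l; last exact: ilog_le_iterlog.
exact/pow_le/Rlt_le.
Qed.
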